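(* Let $R$ be a $*$-ring with unity having generalized comparability for elements, and let $e$ be a projection of $R$. Then the $*$-ring $eRe$ (with unity $e$ and the restricted involution) has generalized comparability for elements.
   Context: Natural partial order: $a\leq b$ iff there is $x$ with $a=xa=xb=ax^*=bx^*$. Equivalence: $a\sim b$ iff there exist $x,y$ with $aa^*=xx^*$, $bb^*=yy^*$, $a^*a=y^*y$, $b^*b=x^*x$, $x=ax=xb$, $y=by=ya$. Dominance: $a\lesssim b$ iff $a\sim c\leq b$ for some $c$. A $*$-ring $S$ with unity $1_S$ has generalized comparability for elements if for all $a,b\in S$ there is a central projection $h$ of $S$ with $ha\lesssim hb$ and $(1_S-h)b\lesssim(1_S-h)a$ (all relations computed in $S$). Projection: $e=e^2=e^*$. *)

From HB Require Import structures.
From mathcomp Require Import all_boot all_order all_algebra.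
Set Implicit Arguments. Unset Strict Implicit. Unset Printing Implicit Defensive.
Import GRing.Theory.
Local Open Scope ring_scope.

Definition is_star (R : pzRingType) (st : R -> R) : Prop :=
  (forall x y : R, st (x + y) = st x + st y) /\
  (forall x y : R, st (x * y) = st y * st x) /\
  (forall x : R, st (st x) = x).

Section Rel.
Variables (R : pzRingType) (st : R -> R).
(* All relations are computed inside a sub-*-ring given by a carrier predicate
   S (closed under the operations) with unity u.  For R itself, S is the
   full predicate and u = 1; for the corner eRe, S z := exists r, z = e r e
   and u = e. *)
Variable S : R -> Prop.

Definition npo (a b : R) : Prop :=
  exists x, S x /\ a = x * a /\ a = x * b /\ a = a * st x /\ a = b * st x.

Definition sequiv (a b : R) : Prop :=
  exists x y, S x /\ S y /\
    a * st a = x * st x /\ b * st b = y * st y /\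
    st a * a = st y * y /\ st b * b = st x * x /\
    x = a * x /\ x = x * b /\ y = b * y /\ y = y * a.

Definition sdom (a b : R) : Prop := exists c, S c /\ sequiv a c /\ npo c b.

Definition is_projection (e : R) : Prop := e * e = e /\ st e = e.

Definition central_projection (h : R) : Prop :=
  S h /\ is_projection h /\ (forall s, S s -> h * s = s * h).

Definition gen_comparability (u : R) : Prop :=
  forall a b, S a -> S b ->
    exists h, central_projection h /\
      sdom (h * a) (h * b) /\ sdom ((u - h) * b) ((u - h) * a).
End Rel.

Definition fullR (R : pzRingType) : R -> Prop := fun _ => True.
Definition corner (R : pzRingType) (e : R) : R -> Prop :=
  fun z => exists r, z = e * r * e.

From mathcomp Require Import all_boot all_order all_algebra.
Set Implicit Arguments. Unset Strict Implicit. Unset Printing Implicit Defensive.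
Import GRing.Theory.
Local Open Scope ring_scope.

(* A central projection h of R yields the central projection h e of eRe, and
   on elements of eRe multiplication by h e (resp. e - h e) agrees with
   multiplication by h (resp. 1 - h).  It remains to see that dominance in R
   between elements of eRe is dominance in eRe: if a ~ c <= b in R with a, b
   in eRe, then c is in eRe because c = z b = b z^*, the partial isometries
   witnessing a ~ c are in eRe because x = a x = x c and y = c y = y a, and
   the witness z of c <= b may be replaced by e z e. *)

Section Corner.
Variables (R : pzRingType) (st : R -> R) (e : R).
Hypothesis st_mul : forall x y : R, st (x * y) = st y * st x.
Hypothesis e_idem : e * e = e.
Hypothesis st_e : st e = e.

Lemma cornerP (x : R) : corner e x <-> e * x = x /\ x * e = x.
Proof.
split=> [[r ->]|[ex xe]]; last by exists x; rewrite ex xe.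
by rewrite !mulrA e_idem -!mulrA e_idem.
Qed.

Lemma corner_mull (s a : R) :
  s * e = e * s -> corner e a -> corner e (s * a).
Proof.
move=> se /cornerP[ea ae]; apply/cornerP.
by rewrite mulrA -se -mulrA ea -mulrA ae.
Qed.

Lemma mulr_corner (s a : R) : corner e a -> s * e * a = s * a.
Proof. by move=> /cornerP[ea _]; rewrite -mulrA ea. Qed.

Lemma central_projection_corner (h : R) :
  central_projection st (@fullR R) h -> central_projection st (corner e) (h * e).
Proof.
move=> [_ [[hh st_h] hC]].
have he : h * e = e * h by exact: hC.
split; first by apply: corner_mull => //; apply/cornerP; rewrite e_idem.
have he_idem : h * e * (h * e) = h * e.
  by rewrite mulrA -[h * e * h]mulrA -he mulrA hh -mulrA e_idem.
split; first by split; rewrite // st_mul st_e st_h he.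
move=> s Es; rewrite mulr_corner //.
by move/cornerP: Es => [_ se]; rewrite hC // -{1}se -mulrA -he mulrA.
Qed.

Lemma npo_corner_closed (c b : R) :
  npo st (@fullR R) c b -> corner e b -> corner e c.
Proof.
case=> z [_ [_ [zb [_ bz]]]] /cornerP[eb be]; apply/cornerP.
split; first by rewrite {1}bz mulrA eb -bz.
by rewrite {1}zb -mulrA be -zb.
Qed.

Lemma npo_full_corner (c b : R) : corner e c -> corner e b ->
  npo st (@fullR R) c b -> npo st (corner e) c b.
Proof.
move=> /cornerP[ec ce] /cornerP[eb be] [z [_ [zc [zb [cz bz]]]]].
exists (e * z * e); split; first by exists z.
rewrite !st_mul st_e !mulrA; split; [|split; [|split]].
- by rewrite -[e * z * e * c]mulrA ec -mulrA -zc ec.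
- by rewrite -[e * z * e * b]mulrA eb -mulrA -zb ec.
- by rewrite ce -cz ce.
- by rewrite be -bz ce.
Qed.

Lemma sequiv_full_corner (a c : R) : corner e a -> corner e c ->
  sequiv st (@fullR R) a c -> sequiv st (corner e) a c.
Proof.
move=> /cornerP[ea ae] /cornerP[ec ce].
case=> x [y [_ [_ [aa [cc [aa' [cc' [xa [xc [yc ya]]]]]]]]]].
exists x, y; split; [|split=> //].
- apply/cornerP; split; first by rewrite {1}xa mulrA ea -xa.
  by rewrite {1}xc -mulrA ce -xc.
- apply/cornerP; split; first by rewrite {1}yc mulrA ec -yc.
  by rewrite {1}ya -mulrA ae -ya.
Qed.

Lemma sdom_full_corner (a b : R) : corner e a -> corner e b ->
  sdom st (@fullR R) a b -> sdom st (corner e) a b.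
Proof.
move=> Ea Eb [c [_ [ac cb]]].
have Ec := npo_corner_closed cb Eb.
exists c; split=> //; split; first exact: sequiv_full_corner.
exact: npo_full_corner.
Qed.

End Corner.

Theorem mainTheorem16 (R : pzRingType) (st : R -> R) (e : R) :
  is_star st ->
  gen_comparability st (@fullR R) 1 ->
  is_projection st e ->
  gen_comparability st (corner e) e.
Proof.
move=> [_ [st_mul _]] Hcomp [e_idem st_e] a b Ea Eb.
have [h [hC [hab hba]]] := Hcomp a b I I.
have he : h * e = e * h by exact: hC.2.2.
have h'e : (1 - h) * e = e * (1 - h) by rewrite mulrBl mulrBr mul1r mulr1 he.
exists (h * e); split; first exact: central_projection_corner.
have -> : e - h * e = (1 - h) * e by rewrite mulrBl mul1r.
rewrite !(mulr_corner e_idem) //.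
by split; apply: sdom_full_corner => //; apply: corner_mull.
Qed.
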